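(* Let $G=H\langle a\rangle$ be a finite group, where $H$ is a normal subgroup of $G$ and the order of $a$ is coprime to $|H|$. Then $\langle \mathcal R(a)\rangle=[H,a]$.
   Context: Commutators: $[x,y]=x^{-1}y^{-1}xy$, left-normed, and $[x,{}_n\,y]=[x,y,\dots,y]$ with $y$ repeated $n$ times. $\mathcal R(a)$ denotes the minimal right Engel sink of $a$ in $G$: the smallest subset of $G$ such that for every $x\in G$ the commutators $[a,{}_n\,x]$ lie in it for all sufficiently large $n$. $[H,a]$ denotes the subgroup generated by all $h^{-1}h^{a}$, $h\in H$. *)

From mathcomp Require Import all_boot all_fingroup.
Set Implicit Arguments. Unset Strict Implicit. Unset Printing Implicit Defensive.
Local Open Scope group_scope.

(* Left-normed iterated commutator [a, _n x] = [a, x, ..., x] (n copies of x).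
   MathComp's [~ g, x] is g^-1 * x^-1 * g * x, matching the paper. *)
Definition engel_comm (gT : finGroupType) (a x : gT) (n : nat) : gT :=
  iter n (fun g => [~ g, x]) a.

Definition right_engel_sink (gT : finGroupType) (G : {set gT}) (a : gT)
    (S : {set gT}) : Prop :=
  S \subset G /\
  forall x, x \in G -> exists N, forall n, N <= n -> engel_comm a x n \in S.

Definition min_right_engel_sink (gT : finGroupType) (G : {set gT}) (a : gT)
    (R : {set gT}) : Prop :=
  right_engel_sink G a R /\ forall S, right_engel_sink G a S -> R \subset S.

Definition commg_elt (gT : finGroupType) (H : {set gT}) (a : gT) : {set gT} :=
  <<[set [~ h, a] | h in H]>>.

(* For x = h a^k in G = H<a> one has [a, x] = [h, a]^-1 conjugated by a^k, so
   the normal subgroup [H, a] of G is a right Engel sink of a and R(a) lies in it.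
   Conversely, for h in H and y = (a^-1)^h we have [a, y] = [y a, y] = [[h, a], y]:
   the Engel sequence of a along y is the orbit of [h, a] under g |-> [g, y].
   By coprime action [H, a] is generated by the [Q, a] = [Q, a, a] with Q an
   a-invariant Sylow subgroup of H, which reduces the claim to a p-group
   P = [P, a]. There a, hence its conjugate y^-1, has no nontrivial fixed point
   on P/Phi(P), so g |-> [g, y] is injective on P/Phi(P) and the orbit of [h, a]
   modulo Phi(P) is periodic: R(a) meets every coset [h, a] Phi(P). So R(a)
   generates P modulo Phi(P), hence generates P. *)

From mathcomp Require Import all_boot all_fingroup all_solvable.
Set Implicit Arguments. Unset Strict Implicit. Unset Printing Implicit Defensive.
Local Open Scope group_scope.

Section Commutators.

Variable gT : finGroupType.
Implicit Types (a h x y : gT) (G H V : {group gT}).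

Lemma engel_commS_mulg a y n :
  engel_comm a y n.+1 = iter n.+1 (fun g => [~ g, y]) (y * a).
Proof. by rewrite /engel_comm !iterSr /= commMgJ commgg conj1g mul1g. Qed.

Lemma commg_norm_mem G y : y \in 'N(G) -> {homo (fun g => [~ g, y]) : g / g \in G}.
Proof. by move=> nGy g Gg; rewrite commgEl groupM ?groupV // memJ_norm. Qed.

Lemma engel_commS_mem G a x n :
  x \in 'N(G) -> [~ a, x] \in G -> engel_comm a x n.+1 \in G.
Proof.
move=> nGx Gax; rewrite /engel_comm iterSr.
exact: iter_in (commg_norm_mem nGx) _ Gax.
Qed.

Lemma commg_eltE H a : a \in 'N(H) -> commg_elt H a = [~: H, <[a]>].
Proof.
move=> nHa; apply/eqP; rewrite eqEsubset !gen_subG; apply/andP; split.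
  by apply/subsetP => _ /imsetP[h Hh ->]; rewrite mem_commg ?cycle_id.
apply/subsetP => _ /imset2P[h _ Hh /cycleP[k ->] ->].
elim: k h Hh => [|k IHk] h Hh; first by rewrite commg1 group1.
rewrite expgSr commgMJ conjRg conjXg [a ^ a]conjgE mulKg.
rewrite groupM ?IHk ?memJ_norm //.
by rewrite mem_gen //; apply/imsetP; exists h.
Qed.

Lemma commg_inj_in V y :
  y \in 'N(V) -> 'C_V[y] = 1 -> {in V &, injective (fun g => [~ g, y])}.
Proof.
move=> nVy cVy u v Vu Vv /=; rewrite !commgEl => euv.
have /conjg_fixP/commgP/cent1P cvu : (v * u^-1) ^ y = v * u^-1.
  by rewrite conjMg conjVg -(mulKVg v (v ^ y)) -euv mulgA mulgK.
suff : v * u^-1 \in [1 gT] by rewrite inE -eq_mulgV1 eq_sym => /eqP.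
by rewrite -cVy inE groupM ?groupV.
Qed.

Lemma cent1_conjV_trivial V x h :
  h \in V -> 'C_V[x] = 1 -> 'C_V[(x^-1) ^ h] = 1.
Proof.
move=> Vh cVx; rewrite cent1J -cent_cycle cycleV cent_cycle.
by rewrite -{1}(conjGid Vh) -conjIg cVx conjs1g.
Qed.

End Commutators.

Lemma iter_commg_coset_periodic (gT : finGroupType) (N P : {group gT}) (y t : gT) :
    P \subset 'N(N) -> y \in 'N(P) -> y \in 'N(N) -> 'C_(P / N)[coset N y] = 1 ->
    t \in P ->
  exists2 q, 0 < q & forall k,
    coset N (iter (k * q) (fun g => [~ g, y]) t) = coset N t.
Proof.
move=> nNP nPy nNy cVy Pt.
set f := fun g => [~ g, y]; set fb := fun u => [~ u, coset N y].
have nVy : coset N y \in 'N(P / N).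
  by rewrite (subsetP (quotient_norm N P)) ?mem_quotient.
have fP : {homo f : g / g \in P} := commg_norm_mem nPy.
have fV : {homo fb : u / u \in P / N} := commg_norm_mem nVy.
have coset_iter n : coset N (iter n f t) = iter n fb (coset N t).
  elim: n => [|n IHn] //=; rewrite -IHn morphR //.
  by rewrite (subsetP nNP) // (iter_in _ fP).
exists (fingraph.order fb (coset N t)); first exact: fingraph.order_gt0.
move=> k; rewrite coset_iter iterM iter_fix //.
by rewrite (iter_order_in fV (commg_inj_in nVy cVy)) ?mem_quotient.
Qed.

Section CoprimeAction.

Variables (gT : finGroupType) (A : {group gT}).
Hypothesis solA : solvable A.

Lemma coprime_cent_commg_mul (H : {group gT}) :
  A \subset 'N(H) -> coprime #|H| #|A| -> 'C_H(A) * [~: H, A] = H.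
Proof.
move=> nHA coHA.
have sRH : [~: H, A] \subset H by rewrite commg_subl.
have nRH : H \subset 'N([~: H, A]) := commg_norml H A.
have nRA : A \subset 'N([~: H, A]) := commg_normr A H.
have := @strongest_coprime_quotient_cent _ A H _ nRA.
rewrite setIid (coprimeSg sRH coHA) solA orbT => /(_ sRH isT isT).
rewrite (setIidPl (quotient_cents2r (subxx _))) => defHq.
have nRC : 'C_H(A) \subset 'N([~: H, A]) := subset_trans (subsetIl _ _) nRH.
apply/eqP; rewrite eqEsubset mul_subG ?subsetIl //= (normC nRC).
by rewrite -quotientSK // defHq.
Qed.

Lemma commg_sub_cent_mul (H L : {group gT}) :
  A \subset 'N(L) -> H \subset 'C_H(A) * L -> [~: H, A] \subset L.
Proof.
move=> nLA sHCL; rewrite gen_subG; apply/subsetP => _ /imset2P[y z Hy Az ->].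
have /mulsgP[c l /setIP[_ cAc] Ll ->] := subsetP sHCL y Hy.
have /commgP/eqP cz : commute c z := centP cAc z Az.
rewrite commMgJ cz conj1g mul1g.
by rewrite commgEl groupM ?groupV // memJ_norm // (subsetP nLA).
Qed.

Lemma coprime_commGAA (H : {group gT}) :
  A \subset 'N(H) -> coprime #|H| #|A| -> [~: H, A, A] = [~: H, A].
Proof.
move=> nHA coHA.
have sRH : [~: H, A] \subset H by rewrite commg_subl.
have nRA : A \subset 'N([~: H, A]) := commg_normr A H.
apply/eqP; rewrite eqEsubset commg_subl nRA /=.
apply: commg_sub_cent_mul; first exact: commg_normr.
rewrite -{1}(coprime_cent_commg_mul nHA coHA).
rewrite -{1}(coprime_cent_commg_mul nRA (coprimeSg sRH coHA)) mulgA.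
by rewrite mulgSS // mulGSid // setSI.
Qed.

Lemma coprime_commg_Sylow_gen (H : {group gT}) :
    A \subset 'N(H) -> coprime #|H| #|A| ->
  [~: H, A] = <<\bigcup_(Q : {group gT} | Sylow H Q && (A \subset 'N(Q))) [~: Q, A]>>.
Proof.
move=> nHA coHA; set L := <<_>>.
have sylH Q : Sylow H Q -> Q \subset H by case/andP=> _ /andP[].
have sLR : L \subset [~: H, A].
  by rewrite gen_subG; apply/bigcupsP => Q /andP[/sylH sQH _]; apply: commSg.
apply/eqP; rewrite eqEsubset sLR andbT.
have nLA : A \subset 'N(L).
  by apply/norms_gen/norms_bigcup/bigcapsP => Q _; apply: commg_normr.
have nLC : 'C_H(A) \subset 'N(L).
  apply/subsetP => c /setIP[Hc cAc]; have nAc := subsetP (cent_sub A) c cAc.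
  rewrite inE -genJ genS //; apply/subsetP => _ /imsetP[x /bigcupP[Q nQ Qx] ->].
  apply/bigcupP; exists (Q :^ c)%G; last by rewrite /= -(normP nAc) -conjsRg memJ_conjg.
  by rewrite /= SylowJ // -(normP nAc) normJ conjSg.
apply: commg_sub_cent_mul nLA _.
pose T := [set Q : {group gT} | Sylow H Q && (A \subset 'N(Q))].
rewrite -(norm_joinEl nLC) -{1}(@Sylow_transversal_gen _ T H) => [|Q | p _].
- rewrite gen_subG; apply/bigcupsP => Q; rewrite inE => /andP[sylQ nQA].
  have coQA := coprimeSg (sylH Q sylQ) coHA.
  rewrite -(coprime_cent_commg_mul nQA coQA) mul_subG //.
    exact: subset_trans (setSI _ (sylH Q sylQ)) (joing_subl _ _).
  apply: subset_trans (joing_subr _ _); apply: sub_gen.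
  by apply: (bigcup_sup Q); rewrite sylQ.
- by rewrite inE => /andP[/sylH].
have [P sylP nPA] := sol_coprime_Sylow_exists p solA nHA coHA.
by exists P; rewrite // inE (p_Sylow sylP).
Qed.

End CoprimeAction.

Lemma Phi_quotient_cent1_trivial (gT : finGroupType) (p : nat) (P : {group gT}) a :
    p.-group P -> a \in 'N(P) -> coprime #|P| #[a] -> [~: P, <[a]>] = P ->
  'C_(P / 'Phi(P))[coset 'Phi(P) a] = 1.
Proof.
move=> pP nPa coPa defP; set N := 'Phi(P).
have nPA : <[a]> \subset 'N(P) by rewrite cycle_subG.
have nNA : <[a]> \subset 'N(N) := char_norm_trans (Phi_char P) nPA.
have nNP : P \subset 'N(N) := normal_norm (Phi_normal P).
have coVA : coprime #|P / N| #|<[a]> / N| by apply: coprime_morph; rewrite -orderE.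
have abV := abelem_abelian (Phi_quotient_abelem pP).
have := coprime_abel_cent_TI (quotient_norms N nPA) coVA abV.
by rewrite -quotientR //= defP quotient_cycle -?cycle_subG // cent_cycle.
Qed.

Lemma pgroup_sub_engel_sink (gT : finGroupType) (p : nat) (G P : {group gT}) a S :
    p.-group P -> P \subset G -> a \in G -> a \in 'N(P) -> coprime #|P| #[a] ->
    [~: P, <[a]>] = P -> right_engel_sink G a S ->
  P \subset <<S>>.
Proof.
move=> pP sPG aG nPa coPa defP [_ sinkS]; set N := 'Phi(P).
have nNP : P \subset 'N(N) := normal_norm (Phi_normal P).
have nN y : y \in 'N(P) -> y \in 'N(N).
  by rewrite -!cycle_subG; apply: char_norm_trans (Phi_char P).
suff sPNS : P \subset N <*> (S :&: P).
  have defSP : <<S :&: P>> = P.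
    apply: Phi_nongen; apply/eqP; rewrite eqEsubset sPNS andbT.
    by rewrite join_subG Phi_sub subsetIr.
  by rewrite -defSP genS // subsetIl.
rewrite -{1}defP -commg_eltE // gen_subG; apply/subsetP => _ /imsetP[h Ph ->].
set y := (a^-1) ^ h; set t := [~ h, a].
have nPy : y \in 'N(P) by rewrite groupJ ?groupV // (subsetP (normG P)).
have Pt : t \in P by rewrite /t commgEl groupM ?groupV // memJ_norm.
have cVy : 'C_(P / N)[coset N y] = 1.
  have Nh : h \in 'N(N) := nN h (subsetP (normG P) h Ph).
  have Na : a \in 'N(N) := nN a nPa.
  rewrite morphJ ?morphV ?groupV //.
  exact: cent1_conjV_trivial (mem_quotient N Ph)
    (Phi_quotient_cent1_trivial pP nPa coPa defP).
have [q q_gt0 periodic] := iter_commg_coset_periodic nNP nPy (nN y nPy) cVy Pt.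
have [n0 sink_n0] := sinkS y (groupJ (groupVr aG) (subsetP sPG h Ph)).
set n := (n0.+1 * q)%N; set s := iter n (fun g => [~ g, y]) t.
have n_gt0 : 0 < n by rewrite muln_gt0.
have Ss : s \in S.
  rewrite /s -(prednK n_gt0) /t commgEr -engel_commS_mulg prednK // sink_n0 //.
  exact: leq_trans (leqnSn n0) (leq_pmulr _ q_gt0).
have Ps : s \in P := iter_in _ (commg_norm_mem nPy) Pt.
have /rcosetP[z Nz ->] : t \in N :* s.
  by apply/rcoset_kercosetP; rewrite ?(subsetP nNP) ?periodic.
rewrite groupM //; first exact: subsetP (joing_subl _ _) z Nz.
by apply: (subsetP (joing_subr _ _)); rewrite inE Ss.
Qed.

Lemma commg_cycle_sub_engel_sink (gT : finGroupType) (G H : {group gT}) a S :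
    H \subset G -> a \in G -> a \in 'N(H) -> coprime #|H| #[a] ->
    right_engel_sink G a S ->
  [~: H, <[a]>] \subset <<S>>.
Proof.
move=> sHG aG nHa coHa sinkS.
have solA : solvable <[a]> := abelian_sol (cycle_abelian a).
have nHA : <[a]> \subset 'N(H) by rewrite cycle_subG.
have coHA : coprime #|H| #|<[a]>| by rewrite -orderE.
rewrite (coprime_commg_Sylow_gen solA nHA coHA) gen_subG.
apply/bigcupsP => Q /andP[/andP[pQ /andP[sQH _]] nQA].
have sRQ : [~: Q, <[a]>] \subset Q by rewrite commg_subl.
have coQA := coprimeSg sQH coHA.
apply: (pgroup_sub_engel_sink (pgroupS sRQ pQ) _ aG _ _ _ sinkS).
- exact: subset_trans sRQ (subset_trans sQH sHG).
- by rewrite -cycle_subG commg_normr.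
- by rewrite orderE (coprimeSg sRQ coQA).
exact: (coprime_commGAA solA nQA coQA).
Qed.

Lemma engel_sink_commg (gT : finGroupType) (G H : {group gT}) a :
  H <| G -> H * <[a]> = G -> right_engel_sink G a [~: H, <[a]>].
Proof.
move=> nsHG defG; have nHG := normal_norm nsHG.
have sAG : <[a]> \subset G by rewrite -defG mulG_subr.
have nsRG : [~: H, <[a]>] <| G.
  by rewrite -defG -norm_joinEr ?commg_normal // (subset_trans sAG nHG).
split=> [|x Gx]; first exact: normal_sub nsRG.
exists 1%N => -[|n] // _; apply: engel_commS_mem.
  exact: subsetP (normal_norm nsRG) x Gx.
move: Gx; rewrite -defG => /mulsgP[h y Hh Ay ->].
have /commgP/eqP cay : commute a y by case/cycleP: Ay => k ->; apply: commuteX.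
rewrite commgMJ cay mul1g memJ_norm.
  by rewrite -invgR groupV mem_commg ?cycle_id.
exact: subsetP (normal_norm nsRG) y (subsetP sAG y Ay).
Qed.

Theorem lemma2p5 (gT : finGroupType) (G H : {group gT}) (a : gT) (R : {set gT}) :
  H <| G -> H * <[a]> = G -> coprime #|H| #[a] ->
  min_right_engel_sink G a R ->
  <<R>> = commg_elt H a.
Proof.
move=> nsHG defG coHa [sinkR minR].
have aG : a \in G by rewrite -defG (subsetP (mulG_subr _ _)) ?cycle_id.
have nHa : a \in 'N(H) := subsetP (normal_norm nsHG) a aG.
apply/eqP; rewrite commg_eltE // eqEsubset gen_subG.
rewrite (minR _ (engel_sink_commg nsHG defG)) /=.
exact: commg_cycle_sub_engel_sink (normal_sub nsHG) aG nHa coHa sinkR.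
Qed.
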